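(* For all $0<x<\pi/2$, \[ \frac{\pi^2+\frac{\pi^2-12}{3}x^2+\frac{384-4\pi^4}{3\pi^4}x^4}{\pi^2-4x^2}<\frac{\tan x}{x}<\frac{\pi^2+\frac{72-8\pi^2}{\pi^2}x^2+\frac{16\pi^2-160}{\pi^4}x^4}{\pi^2-4x^2}. \] *)

From Stdlib Require Import Reals.

From Stdlib Require Import Reals Lra Machin.
Open Scope R_scope.

(* Since cos x > 0 and PI^2 - 4 x^2 > 0, clearing denominators turns each bound
   into an inequality between x * Q(x) * cos x and c PI^4 (PI^2 - 4 x^2) sin x
   for an explicit even quartic Q.  For x <= 157/200 (about PI/4) we replace
   sin x and cos x by alternating Taylor bounds; for larger x we write
   x = PI/2 - y, which swaps sin and cos, and use the Taylor bounds at y.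
   Either way a polynomial inequality in y and PI remains, and it is proved
   for every PI in [3.141592, 3.141593]: a positive multiple of the difference
   is a sum of terms c * m(PI) * y^i * (a - b y)^j with c > 0 and m(PI) of
   constant sign on that interval (a Bernstein expansion over [0, a/b]). *)

Lemma PI_bounds : 3141592/1000000 < PI < 3141593/1000000.
Proof.
  destruct (PI_2_3_7_ineq 4) as [Hlo Hhi].
  unfold tg_alt, PI_2_3_7_tg, Ratan_seq in Hlo, Hhi.
  simpl sum_f_R0 in Hlo, Hhi. simpl INR in Hlo, Hhi.
  split; lra.
Qed.

Definition sin_taylor7 (a : R) : R := a - a^3/6 + a^5/120 - a^7/5040.
Definition sin_taylor9 (a : R) : R := sin_taylor7 a + a^9/362880.
Definition cos_taylor6 (a : R) : R := 1 - a^2/2 + a^4/24 - a^6/720.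
Definition cos_taylor8 (a : R) : R := cos_taylor6 a + a^8/40320.

Ltac expand_taylor_sum :=
  cbn [sum_f_R0 Nat.mul Nat.add]; rewrite !fact_simpl, !mult_INR;
  cbn [INR Factorial.fact]; field.

Lemma sin_taylor_bounds (a : R) :
  0 <= a <= PI -> sin_taylor7 a <= sin a <= sin_taylor9 a.
Proof.
  intros [ha0 ha1]. destruct (sin_bound a 1 ha0 ha1) as [Hlo Hhi].
  replace (sin_approx a (2*1+1)) with (sin_taylor7 a) in Hlo
    by (unfold sin_approx, sin_term, sin_taylor7; expand_taylor_sum).
  replace (sin_approx a (2*(1+1))) with (sin_taylor9 a) in Hhi
    by (unfold sin_approx, sin_term, sin_taylor9, sin_taylor7; expand_taylor_sum).
  split; assumption.
Qed.

Lemma cos_taylor_bounds (a : R) :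
  - PI/2 <= a <= PI/2 -> cos_taylor6 a <= cos a <= cos_taylor8 a.
Proof.
  intros [ha0 ha1]. destruct (cos_bound a 1 ha0 ha1) as [Hlo Hhi].
  replace (cos_approx a (2*1+1)) with (cos_taylor6 a) in Hlo
    by (unfold cos_approx, cos_term, cos_taylor6; expand_taylor_sum).
  replace (cos_approx a (2*(1+1))) with (cos_taylor8 a) in Hhi
    by (unfold cos_approx, cos_term, cos_taylor8, cos_taylor6; expand_taylor_sum).
  split; assumption.
Qed.

(* The two bounds of the theorem are tan_lower_numer PI x / (3 PI^4 (PI^2 - 4x^2))
   and tan_upper_numer PI x / (PI^4 (PI^2 - 4x^2)). *)
Definition tan_lower_numer (p x : R) : R :=
  3*p^6 + (p^6 - 12*p^4)*x^2 + (384 - 4*p^4)*x^4.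
Definition tan_upper_numer (p x : R) : R :=
  p^6 + (72*p^2 - 8*p^4)*x^2 + (16*p^2 - 160)*x^4.

Lemma tan_lower_numer_pos (p x : R) :
  3 < p < 4 -> 0 < x < p/2 -> 0 < tan_lower_numer p x.
Proof.
  intros [hp_lo hp_hi] [hx0 hx1]. unfold tan_lower_numer.
  assert (hx2 : x^2 < p^2/4) by nra.
  assert (0 < p^2) by nra.
  assert (hx4 : x^4 < p^4/16) by nra.
  nra.
Qed.

Lemma tan_upper_numer_pos (p x : R) :
  3 < p < 315/100 -> 0 < x < p/2 -> 0 < tan_upper_numer p x.
Proof.
  intros [hp_lo hp_hi] [hx0 hx1]. unfold tan_upper_numer.
  assert (hx2 : 0 < x^2 < p^2/4) by (split; nra).
  assert (hp2 : 9 < p^2 < 10) by (split; nra).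
  assert (hp4 : 0 < p^4) by (apply pow_lt; lra).
  assert (0 <= (160 - 16*p^2) * (x^2 * (p^2/4 - x^2))) by (apply Rmult_le_pos; nra).
  assert (0 <= p^4 * (p^2/4 - x^2)) by (apply Rmult_le_pos; lra).
  assert (0 <= p^4 * x^2) by (apply Rmult_le_pos; lra).
  nra.
Qed.

Lemma lt_mul_sandwich (u v c c' s s' : R) :
  0 <= u -> 0 <= v -> c <= c' -> s' <= s -> u * c' < v * s' -> u * c < v * s.
Proof.
  intros hu hv hc hs H.
  apply Rle_lt_trans with (u * c'); [apply Rmult_le_compat_l; assumption|].
  apply Rlt_le_trans with (v * s'); [assumption|apply Rmult_le_compat_l; assumption].
Qed.

Lemma Rdiv_lt_Rdiv (a b c d : R) :
  0 < b -> 0 < d -> a * d < c * b -> a / b < c / d.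
Proof.
  intros hb hd H. apply Rlt_0_minus.
  replace (c / d - a / b) with ((c * b - a * d) / (b * d)) by (field; lra).
  apply Rdiv_lt_0_compat; [lra|]. apply Rmult_lt_0_compat; assumption.
Qed.

Lemma pos_of_scaled_eq (K c e : R) : 0 < K -> K * e = c -> 0 < c -> 0 < e.
Proof. intros hK <- hc. destruct (Rle_or_lt e 0); [nra|assumption]. Qed.

(* The bounds on p and y that make the monotone factors and a - b y
   nonnegative must be in the context, for [lra]. *)
Ltac certificate_nonneg :=
  lazymatch goal with
  | |- 0 <= _ ^ ?n - _ ^ ?n => apply Rge_le, Rge_minus, Rle_ge, pow_incr; split; lra
  | |- 0 <= _ + _ => apply Rplus_le_le_0_compat; certificate_nonneg
  | |- 0 <= _ * _ => apply Rmult_le_pos; certificate_nonneg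
  | |- 0 <= _ ^ _ => apply pow_le; lra
  | |- _ => lra
  end.

Ltac certificate_pos :=
  lazymatch goal with
  | |- 0 < _ + _ =>
      first [ apply Rplus_le_lt_0_compat; [certificate_nonneg | certificate_pos]
            | apply Rplus_lt_le_0_compat; [certificate_pos | certificate_nonneg] ]
  | |- 0 < _ * _ => apply Rmult_lt_0_compat; certificate_pos
  | |- 0 < _ ^ 0 => rewrite pow_O; lra
  | |- 0 < _ ^ _ => apply pow_lt; lra
  | |- _ => lra
  end.

Definition lower_certificate_near_0 (p y : R) : R :=
  (1590156288000000000000*((3141593^4-(1000000*p)^4)*(y^7*(157-200*y)^6))
  + 1908187545600000000000000*((3141593^4-(1000000*p)^4)*(y^8*(157-200*y)^5))
  + 950360843053056000000000000*((3141593^4-(1000000*p)^4)*(y^9*(157-200*y)^4))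
  + 251438662282444800000000000000*((3141593^4-(1000000*p)^4)*(y^10*(157-200*y)^3))
  + 37271022699961707188000000000000*((3141593^4-(1000000*p)^4)*(y^11*(157-200*y)^2))
  + 2934916291949098875200000000000000*((3141593^4-(1000000*p)^4)*(y^12*(157-200*y)^1))
  + 95922835345241993974396000000000000*((3141593^4-(1000000*p)^4)*(y^13*(157-200*y)^0))
  + 16128*(((1000000*p)^6-3141592^6)*(y^5*(157-200*y)^8))
  + 25804800*(((1000000*p)^6-3141592^6)*(y^6*(157-200*y)^7))
  + 18025499136*(((1000000*p)^6-3141592^6)*(y^7*(157-200*y)^6))
  + 7179910963200*(((1000000*p)^6-3141592^6)*(y^8*(157-200*y)^5))
  + 1783651682979653*(((1000000*p)^6-3141592^6)*(y^9*(157-200*y)^4))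
  + 282981782863722400*(((1000000*p)^6-3141592^6)*(y^10*(157-200*y)^3))
  + 28000428619044888551*(((1000000*p)^6-3141592^6)*(y^11*(157-200*y)^2))
  + 1579838794840163420400*(((1000000*p)^6-3141592^6)*(y^12*(157-200*y)^1))
  + 38915507868571542040000*(((1000000*p)^6-3141592^6)*(y^13*(157-200*y)^0)))
  + (22385559294984941178844662106953489580032*(y^5*(157-200*y)^8)
  + 35816894871975905886151459371125583328051200*(y^6*(157-200*y)^7)
  + 24595853962074311387683295679699515894906486784*(y^7*(157-200*y)^6)
  + 9457563626182666368975137567809092410179112140800*(y^8*(157-200*y)^5)
  + 2224221022320274858171911776077575444970243634757632*(y^9*(157-200*y)^4)
  + 327091111050522577277216322663919801992894176926105600*(y^10*(157-200*y)^3)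
  + 29319208282546482667418549547481724305293243058249580544*(y^11*(157-200*y)^2)
  + 1461665668087278307471304697842834960833689003291384217600*(y^12*(157-200*y)^1)
  + 30977065079339510484246699294700267726149183408927221760000*(y^13*(157-200*y)^0)).

Definition upper_certificate_near_0 (p y : R) : R :=
  (26127360000000000000000000000000*(((1000000*p)^2-3141592^2)*(y^3*(157-200*y)^8))
  + 41803776000000000000000000000000000*(((1000000*p)^2-3141592^2)*(y^4*(157-200*y)^7))
  + 29083750617600000000000000000000000000*(((1000000*p)^2-3141592^2)*(y^5*(157-200*y)^6))
  + 11490386181120000000000000000000000000000*(((1000000*p)^2-3141592^2)*(y^6*(157-200*y)^5))
  + 2817826389744105600000000000000000000000000*(((1000000*p)^2-3141592^2)*(y^7*(157-200*y)^4))
  + 438697573363284480000000000000000000000000000*(((1000000*p)^2-3141592^2)*(y^8*(157-200*y)^3))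
  + 42265315306188188520768000000000000000000000000*(((1000000*p)^2-3141592^2)*(y^9*(157-200*y)^2))
  + 2297923543524517008307200000000000000000000000000*(((1000000*p)^2-3141592^2)*(y^10*(157-200*y)^1))
  + 53793312618233701042782336000000000000000000000000*(((1000000*p)^2-3141592^2)*(y^11*(157-200*y)^0))
  + 1451520000000000000*((3141593^4-(1000000*p)^4)*(y^3*(157-200*y)^8))
  + 2322432000000000000000*((3141593^4-(1000000*p)^4)*(y^4*(157-200*y)^7))
  + 1595886969600000000000000*((3141593^4-(1000000*p)^4)*(y^5*(157-200*y)^6))
  + 614502443520000000000000000*((3141593^4-(1000000*p)^4)*(y^6*(157-200*y)^5))
  + 144747124608953664000000000000*((3141593^4-(1000000*p)^4)*(y^7*(157-200*y)^4))
  + 21293683815162931200000000000000*((3141593^4-(1000000*p)^4)*(y^8*(157-200*y)^3))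
  + 1901371723735942414944000000000000*((3141593^4-(1000000*p)^4)*(y^9*(157-200*y)^2))
  + 93484164633342469977600000000000000*((3141593^4-(1000000*p)^4)*(y^10*(157-200*y)^1))
  + 1911287919627606304214396000000000000*((3141593^4-(1000000*p)^4)*(y^11*(157-200*y)^0))
  + 120960*((3141593^6-(1000000*p)^6)*(y^3*(157-200*y)^8))
  + 193536000*((3141593^6-(1000000*p)^6)*(y^4*(157-200*y)^7))
  + 135177045696*((3141593^6-(1000000*p)^6)*(y^5*(157-200*y)^6))
  + 53832294835200*((3141593^6-(1000000*p)^6)*(y^6*(157-200*y)^5))
  + 13368889889222832*((3141593^6-(1000000*p)^6)*(y^7*(157-200*y)^4))
  + 2120108488658265600*((3141593^6-(1000000*p)^6)*(y^8*(157-200*y)^3))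
  + 209667624869551511449*((3141593^6-(1000000*p)^6)*(y^9*(157-200*y)^2))
  + 11822252818679356579600*((3141593^6-(1000000*p)^6)*(y^10*(157-200*y)^1))
  + 290996278183404457960000*((3141593^6-(1000000*p)^6)*(y^11*(157-200*y)^0)))
  + (185579977906109677232001394802193987288960*(y^3*(157-200*y)^8)
  + 296927964649775483571202231683510379662336000*(y^4*(157-200*y)^7)
  + 202048402675950809338876127127722489804366642496*(y^5*(157-200*y)^6)
  + 76178423007266700406778102810501175154331810995200*(y^6*(157-200*y)^5)
  + 17367033821831989384827426388085126002846243021668432*(y^7*(157-200*y)^4)
  + 2447629466401099175381020347281964100370280018614745600*(y^8*(157-200*y)^3)
  + 208009622910581271364473238499938091390246534504754149399*(y^9*(157-200*y)^2)
  + 9718606148902432799620182779613370002137229892242011759600*(y^10*(157-200*y)^1)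
  + 189240729360273102516023160493239857873616845630709975960000*(y^11*(157-200*y)^0)).

Definition lower_certificate_near_PI2 (p y : R) : R :=
  (42258137122975334400000000000000000000000000000000000000000000*((3141593^1-(1000000*p)^1)*(y^5*(3929-5000*y)^9))
  + 1901616170533890048000000000000000000000000000000000000000000000000*((3141593^1-(1000000*p)^1)*(y^6*(3929-5000*y)^8))
  + 37923599978119302246813081600000000000000000000000000000000000000000000*((3141593^1-(1000000*p)^1)*(y^7*(3929-5000*y)^7))
  + 439905119651693556238457856000000000000000000000000000000000000000000000000*((3141593^1-(1000000*p)^1)*(y^8*(3929-5000*y)^6))
  + 3270832414745399073553563525000222720000000000000000000000000000000000000000000*((3141593^1-(1000000*p)^1)*(y^9*(3929-5000*y)^5))
  + 16165574434835688899224624125005568000000000000000000000000000000000000000000000000*((3141593^1-(1000000*p)^1)*(y^10*(3929-5000*y)^4))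
  + 53106428643672179237631649718296834211005440000000000000000000000000000000000000000000*((3141593^1-(1000000*p)^1)*(y^11*(3929-5000*y)^3))
  + 111820470740721547834301613273895713165081600000000000000000000000000000000000000000000000*((3141593^1-(1000000*p)^1)*(y^12*(3929-5000*y)^2))
  + 136932076206527481068770822636441650610927255159680000000000000000000000000000000000000000000*((3141593^1-(1000000*p)^1)*(y^13*(3929-5000*y)^1))
  + 74299828467056728836133933619135700303276275798400000000000000000000000000000000000000000000000*((3141593^1-(1000000*p)^1)*(y^14*(3929-5000*y)^0))
  + 10755443401113600000000000000000000000000000000000000*(((1000000*p)^2-3141592^2)*(y^4*(3929-5000*y)^10))
  + 537772170055680000000000000000000000000000000000000000000*(((1000000*p)^2-3141592^2)*(y^5*(3929-5000*y)^9))
  + 12072201789460104985190400000000000000000000000000000000000000*(((1000000*p)^2-3141592^2)*(y^6*(3929-5000*y)^8))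
  + 160224769544996199407616000000000000000000000000000000000000000000*(((1000000*p)^2-3141592^2)*(y^7*(3929-5000*y)^7))
  + 1392302879359599606705485570119680000000000000000000000000000000000000*(((1000000*p)^2-3141592^2)*(y^8*(3929-5000*y)^6))
  + 8276848182377878408498967103590400000000000000000000000000000000000000000*(((1000000*p)^2-3141592^2)*(y^9*(3929-5000*y)^5))
  + 34088648719228970153666268858061764879360000000000000000000000000000000000000*(((1000000*p)^2-3141592^2)*(y^10*(3929-5000*y)^4))
  + 96042915235195328079017526562835297587200000000000000000000000000000000000000000*(((1000000*p)^2-3141592^2)*(y^11*(3929-5000*y)^3))
  + 177153074550810694894446141258824183363791105920000000000000000000000000000000000000*(((1000000*p)^2-3141592^2)*(y^12*(3929-5000*y)^2))
  + 193168798549171324555863590430476954277911059200000000000000000000000000000000000000000*(((1000000*p)^2-3141592^2)*(y^13*(3929-5000*y)^1))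
  + 94553103164999654919997370347589336094777648000000000000000000000000000000000000000000000*(((1000000*p)^2-3141592^2)*(y^14*(3929-5000*y)^0))
  + 1368725299200000000000000000000000000000000*((3141593^3-(1000000*p)^3)*(y^3*(3929-5000*y)^11))
  + 75279891456000000000000000000000000000000000000*((3141593^3-(1000000*p)^3)*(y^4*(3929-5000*y)^10))
  + 1878475774973085388800000000000000000000000000000000*((3141593^3-(1000000*p)^3)*(y^5*(3929-5000*y)^9))
  + 28071491281788842496000000000000000000000000000000000000*((3141593^3-(1000000*p)^3)*(y^6*(3929-5000*y)^8))
  + 279132950761590812387829672960000000000000000000000000000000*((3141593^3-(1000000*p)^3)*(y^7*(3929-5000*y)^7))
  + 1939216413740885268774038553600000000000000000000000000000000000*((3141593^3-(1000000*p)^3)*(y^8*(3929-5000*y)^6))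
  + 9604592724754182005110855736321425920000000000000000000000000000000*((3141593^3-(1000000*p)^3)*(y^9*(3929-5000*y)^5))
  + 33912720645372891174261755008035648000000000000000000000000000000000000*((3141593^3-(1000000*p)^3)*(y^10*(3929-5000*y)^4))
  + 83655847636394417827632193188215916429090240000000000000000000000000000000*((3141593^3-(1000000*p)^3)*(y^11*(3929-5000*y)^3))
  + 137303915920491829858500165019673946436353600000000000000000000000000000000000*((3141593^3-(1000000*p)^3)*(y^12*(3929-5000*y)^2))
  + 134944909125840707266392889093913732181768000000000000000000000000000000000000000*((3141593^3-(1000000*p)^3)*(y^13*(3929-5000*y)^1))
  + 60163593258462493586152564486885553636280000000000000000000000000000000000000000000*((3141593^3-(1000000*p)^3)*(y^14*(3929-5000*y)^0))
  + 78382080000000000000000000000000*(((1000000*p)^4-3141592^4)*(y^2*(3929-5000*y)^12))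
  + 4702924800000000000000000000000000000*(((1000000*p)^4-3141592^4)*(y^3*(3929-5000*y)^11))
  + 129039138741219840000000000000000000000000*(((1000000*p)^4-3141592^4)*(y^4*(3929-5000*y)^10))
  + 2140942537060992000000000000000000000000000000*(((1000000*p)^4-3141592^4)*(y^5*(3929-5000*y)^9))
  + 23921491658527388484236160000000000000000000000000*(((1000000*p)^4-3141592^4)*(y^6*(3929-5000*y)^8))
  + 189615872104500339369446400000000000000000000000000000*(((1000000*p)^4-3141592^4)*(y^7*(3929-5000*y)^7))
  + 1093228935882582485843873996719680000000000000000000000000*(((1000000*p)^4-3141592^4)*(y^8*(3929-5000*y)^6))
  + 4618726596464019796009979901590400000000000000000000000000000*(((1000000*p)^4-3141592^4)*(y^9*(3929-5000*y)^5))
  + 14189313063330286507231203759204012895536000000000000000000000000*(((1000000*p)^4-3141592^4)*(y^10*(3929-5000*y)^4))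
  + 30907235619789056786502091585680257910720000000000000000000000000000*(((1000000*p)^4-3141592^4)*(y^11*(3929-5000*y)^3))
  + 45299628012648296575517767319600276625089942952000000000000000000000000*(((1000000*p)^4-3141592^4)*(y^12*(3929-5000*y)^2))
  + 40102920990099891538972929895989870714899429520000000000000000000000000000*(((1000000*p)^4-3141592^4)*(y^13*(3929-5000*y)^1))
  + 16212815682296909454689338909273877310072302326990072000000000000000000000000*(((1000000*p)^4-3141592^4)*(y^14*(3929-5000*y)^0))
  + 39921154560000000000000000000*(((1000000*p)^5-3141592^5)*(y^3*(3929-5000*y)^11))
  + 2195663500800000000000000000000000*(((1000000*p)^5-3141592^5)*(y^4*(3929-5000*y)^10))
  + 55217327326989601536000000000000000000*(((1000000*p)^5-3141592^5)*(y^5*(3929-5000*y)^9))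
  + 838032104114532069120000000000000000000000*(((1000000*p)^5-3141592^5)*(y^6*(3929-5000*y)^8))
  + 8525863639303511699772333504000000000000000000*(((1000000*p)^5-3141592^5)*(y^7*(3929-5000*y)^7))
  + 61020023844841277236031672640000000000000000000000*(((1000000*p)^5-3141592^5)*(y^8*(3929-5000*y)^6))
  + 313287515251774575650902558583695176000000000000000000*(((1000000*p)^5-3141592^5)*(y^9*(3929-5000*y)^5))
  + 1152946845423126695064645804592379400000000000000000000000*(((1000000*p)^5-3141592^5)*(y^10*(3929-5000*y)^4))
  + 2978028542966719248023131700679368222455524000000000000000000*(((1000000*p)^5-3141592^5)*(y^11*(3929-5000*y)^3))
  + 5137318536706459314040758250952583336832860000000000000000000000*(((1000000*p)^5-3141592^5)*(y^12*(3929-5000*y)^2))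
  + 5322389967801742855803313054597357150680125574580000000000000000000*(((1000000*p)^5-3141592^5)*(y^13*(3929-5000*y)^1))
  + 2506785825257872656274609287903530139519627872900000000000000000000000*(((1000000*p)^5-3141592^5)*(y^14*(3929-5000*y)^0))
  + 4354560000000000000*((3141593^6-(1000000*p)^6)*(y^2*(3929-5000*y)^12))
  + 261273600000000000000000*((3141593^6-(1000000*p)^6)*(y^3*(3929-5000*y)^11))
  + 7274652695009280000000000000*((3141593^6-(1000000*p)^6)*(y^4*(3929-5000*y)^10))
  + 124231834750464000000000000000000*((3141593^6-(1000000*p)^6)*(y^5*(3929-5000*y)^9))
  + 1447773504052006201428288000000000000*((3141593^6-(1000000*p)^6)*(y^6*(3929-5000*y)^8))
  + 12111935311801848057131520000000000000000*((3141593^6-(1000000*p)^6)*(y^7*(3929-5000*y)^7))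
  + 74457378796167945056122544248128000000000000*((3141593^6-(1000000*p)^6)*(y^8*(3929-5000*y)^6))
  + 338271464273879531687644327443840000000000000000*((3141593^6-(1000000*p)^6)*(y^9*(3929-5000*y)^5))
  + 1125191449722088449666763317593177850876000000000000*((3141593^6-(1000000*p)^6)*(y^10*(3929-5000*y)^4))
  + 2667974085555407711928945111223557017520000000000000000*((3141593^6-(1000000*p)^6)*(y^11*(3929-5000*y)^3))
  + 4274275614535827410725066432128797488835541618000000000000*((3141593^6-(1000000*p)^6)*(y^12*(3929-5000*y)^2))
  + 4148982870999098468290621166510124012355416180000000000000000*((3141593^6-(1000000*p)^6)*(y^13*(3929-5000*y)^1))
  + 1843479011974342075166279821539153233388540450000000000000000000*((3141593^6-(1000000*p)^6)*(y^14*(3929-5000*y)^0))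
  + 9980288640000000*(((1000000*p)^7-3141592^7)*(y^3*(3929-5000*y)^11))
  + 548915875200000000000*(((1000000*p)^7-3141592^7)*(y^4*(3929-5000*y)^10))
  + 13697219192512080960000000*(((1000000*p)^7-3141592^7)*(y^5*(3929-5000*y)^9))
  + 204687957263043643200000000000*(((1000000*p)^7-3141592^7)*(y^6*(3929-5000*y)^8))
  + 2035344432636599673661258032000000*(((1000000*p)^7-3141592^7)*(y^7*(3929-5000*y)^7))
  + 14140119683527288418144031120000000000*(((1000000*p)^7-3141592^7)*(y^8*(3929-5000*y)^6))
  + 70033488617999243787266656410677064000000*(((1000000*p)^7-3141592^7)*(y^9*(3929-5000*y)^5))
  + 247280254705843998145658630266926600000000000*(((1000000*p)^7-3141592^7)*(y^10*(3929-5000*y)^4))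
  + 609990555682042629993151408664074390628783000000*(((1000000*p)^7-3141592^7)*(y^11*(3929-5000*y)^3))
  + 1001174386920252926051563703268455859431745000000000*(((1000000*p)^7-3141592^7)*(y^12*(3929-5000*y)^2))
  + 983973295709255157150781482976454297158725000000000000*(((1000000*p)^7-3141592^7)*(y^13*(3929-5000*y)^1))
  + 438692867509622349065695782716873828597875000000000000000*(((1000000*p)^7-3141592^7)*(y^14*(3929-5000*y)^0))
  + 362880*((3141593^8-(1000000*p)^8)*(y^2*(3929-5000*y)^12))
  + 21772800000*((3141593^8-(1000000*p)^8)*(y^3*(3929-5000*y)^11))
  + 597818367760320*((3141593^8-(1000000*p)^8)*(y^4*(3929-5000*y)^10))
  + 9932518388016000000*((3141593^8-(1000000*p)^8)*(y^5*(3929-5000*y)^9))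
  + 111216384356318143099344*((3141593^8-(1000000*p)^8)*(y^6*(3929-5000*y)^8))
  + 884152341443125723973760000*((3141593^8-(1000000*p)^8)*(y^7*(3929-5000*y)^7))
  + 5117044941847641561938218085688*((3141593^8-(1000000*p)^8)*(y^8*(3929-5000*y)^6))
  + 21723001047007243467330542570640000*((3141593^8-(1000000*p)^8)*(y^9*(3929-5000*y)^5))
  + 67134197331609737873011837254070733761*((3141593^8-(1000000*p)^8)*(y^10*(3929-5000*y)^4))
  + 147297646268787625932346316641414675220000*((3141593^8-(1000000*p)^8)*(y^11*(3929-5000*y)^3))
  + 217788795051831428840802821485610064150000000*((3141593^8-(1000000*p)^8)*(y^12*(3929-5000*y)^2))
  + 194835448716718108381616667185366880500000000000*((3141593^8-(1000000*p)^8)*(y^13*(3929-5000*y)^1))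
  + 79753639150205859190942039544208600625000000000000*((3141593^8-(1000000*p)^8)*(y^14*(3929-5000*y)^0)))
  + (5489943441207876134491901997409428888610793739721365120*(y^2*(3929-5000*y)^12)
  + 250307960702341906230107265293151437182621584957520627200000*(y^3*(3929-5000*y)^11)
  + 5176561023782617879591926438612033434119956295293718374344431680*(y^4*(3929-5000*y)^10)
  + 64187832516134940519428219823984333951627381853518446006483664000000*(y^5*(3929-5000*y)^9)
  + 531259899418312012300415138692871163775675434934939379156512821401707056*(y^6*(3929-5000*y)^8)
  + 3090145922909906722307395830137068946387544189120848383450123296633018240000*(y^7*(3929-5000*y)^7)
  + 12941352309704464668326385890392795072940967557760643111910318897549008978727112*(y^8*(3929-5000*y)^6)
  + 39264183639730450993069431981874750178674316146023460963186604078381649819285360000*(y^9*(3929-5000*y)^5)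
  + 85454593468197955999588230406761675068359117936521021645057091884173463600371008947839*(y^10*(3929-5000*y)^4)
  + 129525393201952294988029145854355918837070941891879839094184494079470008147066595340780000*(y^11*(3929-5000*y)^3)
  + 128516386150397830672868482762789412553190009629311065014530448437693116308966105935850000000*(y^12*(3929-5000*y)^2)
  + 73137236580342056002604247862490234302435010892482903779140307221140827714330882719500000000000*(y^13*(3929-5000*y)^1)
  + 16782467220999477983144901198071642292276629934561859483108334000004586966570590399375000000000000*(y^14*(3929-5000*y)^0)).

Definition upper_certificate_near_PI2 (p y : R) : R :=
  (62242149312000000000000000000000000000*((3141593^1-(1000000*p)^1)*(y^5*(3929-5000*y)^7))
  + 2178475225920000000000000000000000000000000*((3141593^1-(1000000*p)^1)*(y^6*(3929-5000*y)^6))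
  + 32516989286990422368000000000000000000000000000*((3141593^1-(1000000*p)^1)*(y^7*(3929-5000*y)^5))
  + 268305925694760559200000000000000000000000000000000*((3141593^1-(1000000*p)^1)*(y^8*(3929-5000*y)^4))
  + 1321635844441622473204893345600000000000000000000000000*((3141593^1-(1000000*p)^1)*(y^9*(3929-5000*y)^3))
  + 3886321226748281178073400184000000000000000000000000000000*((3141593^1-(1000000*p)^1)*(y^10*(3929-5000*y)^2))
  + 6316525234532233846322904063412991200000000000000000000000000*((3141593^1-(1000000*p)^1)*(y^11*(3929-5000*y)^1))
  + 4377456531776669330391183917064956000000000000000000000000000000*((3141593^1-(1000000*p)^1)*(y^12*(3929-5000*y)^0))
  + 12990216960000000000000000000*(((1000000*p)^2-3141592^2)*(y^4*(3929-5000*y)^8))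
  + 519608678400000000000000000000000*(((1000000*p)^2-3141592^2)*(y^5*(3929-5000*y)^7))
  + 9049948143845723520000000000000000000*(((1000000*p)^2-3141592^2)*(y^6*(3929-5000*y)^6))
  + 89635406875371705600000000000000000000000*(((1000000*p)^2-3141592^2)*(y^7*(3929-5000*y)^5))
  + 552171558051158116271806368000000000000000000*(((1000000*p)^2-3141592^2)*(y^8*(3929-5000*y)^4))
  + 2166297929794544725436127360000000000000000000000*(((1000000*p)^2-3141592^2)*(y^9*(3929-5000*y)^3))
  + 5285800677827225516589167940782000000000000000000000*(((1000000*p)^2-3141592^2)*(y^10*(3929-5000*y)^2))
  + 7334008680831194894085311407820000000000000000000000000*(((1000000*p)^2-3141592^2)*(y^11*(3929-5000*y)^1))
  + 4430382278602776858292268781531214303008000000000000000000*(((1000000*p)^2-3141592^2)*(y^12*(3929-5000*y)^0))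
  + 927360000000000000*((3141593^3-(1000000*p)^3)*(y^3*(3929-5000*y)^9))
  + 41731200000000000000000*((3141593^3-(1000000*p)^3)*(y^4*(3929-5000*y)^8))
  + 826013836011840000000000000*((3141593^3-(1000000*p)^3)*(y^5*(3929-5000*y)^7))
  + 9435924260414400000000000000000*((3141593^3-(1000000*p)^3)*(y^6*(3929-5000*y)^6))
  + 68527119416067767905968000000000000*((3141593^3-(1000000*p)^3)*(y^7*(3929-5000*y)^5))
  + 327924920298094197649200000000000000000*((3141593^3-(1000000*p)^3)*(y^8*(3929-5000*y)^4))
  + 1033263502975168291164912439976000000000000*((3141593^3-(1000000*p)^3)*(y^9*(3929-5000*y)^3))
  + 2065281816890104602553686599640000000000000000*((3141593^3-(1000000*p)^3)*(y^10*(3929-5000*y)^2))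
  + 2373338531610158521022842683858700880000000000000*((3141593^3-(1000000*p)^3)*(y^11*(3929-5000*y)^1))
  + 1192772466047115112286103425293504400000000000000000*((3141593^3-(1000000*p)^3)*(y^12*(3929-5000*y)^0))
  + 1320144000000000*((3141593^4-(1000000*p)^4)*(y^4*(3929-5000*y)^8))
  + 52805760000000000000*((3141593^4-(1000000*p)^4)*(y^5*(3929-5000*y)^7))
  + 920758624803159744000000*((3141593^4-(1000000*p)^4)*(y^6*(3929-5000*y)^6))
  + 9140742744094792320000000000*((3141593^4-(1000000*p)^4)*(y^7*(3929-5000*y)^5))
  + 56505545989204015452815664000000*((3141593^4-(1000000*p)^4)*(y^8*(3929-5000*y)^4))
  + 222720995768281589056313280000000000*((3141593^4-(1000000*p)^4)*(y^9*(3929-5000*y)^3))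
  + 546613421252447755386441514075415000000*((3141593^4-(1000000*p)^4)*(y^10*(3929-5000*y)^2))
  + 763695664268385301048751140754150000000000*((3141593^4-(1000000*p)^4)*(y^11*(3929-5000*y)^1))
  + 465037330560276594612087851885375000000000000*((3141593^4-(1000000*p)^4)*(y^12*(3929-5000*y)^0))
  + 94080*(((1000000*p)^5-3141592^5)*(y^3*(3929-5000*y)^9))
  + 4233600000*(((1000000*p)^5-3141592^5)*(y^4*(3929-5000*y)^8))
  + 84443778785856*(((1000000*p)^5-3141592^5)*(y^5*(3929-5000*y)^7))
  + 979852257504960000*(((1000000*p)^5-3141592^5)*(y^6*(3929-5000*y)^6))
  + 7289155440183481690320*(((1000000*p)^5-3141592^5)*(y^7*(3929-5000*y)^5))
  + 36049821628347042258000000*(((1000000*p)^5-3141592^5)*(y^8*(3929-5000*y)^4))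
  + 118530492805287140229390381343*(((1000000*p)^5-3141592^5)*(y^9*(3929-5000*y)^3))
  + 249836516769402877640855720145000*(((1000000*p)^5-3141592^5)*(y^10*(3929-5000*y)^2))
  + 306319794412634105954278600725000000*(((1000000*p)^5-3141592^5)*(y^11*(3929-5000*y)^1))
  + 166448580475469988423797667875000000000*(((1000000*p)^5-3141592^5)*(y^12*(3929-5000*y)^0)))
  + (36311742333903575139315310130626560*(y^3*(3929-5000*y)^9)
  + 1248193746501681092602126758934195200000*(y^4*(3929-5000*y)^8)
  + 18836785003857547584451946477065672954478592*(y^5*(3929-5000*y)^7)
  + 163799772427549815102022373104839828250206720000*(y^6*(3929-5000*y)^6)
  + 904452453146805638569115624361617916460621977354240*(y^7*(3929-5000*y)^5)
  + 3288392156134100236054656492165983084395880797392000000*(y^8*(3929-5000*y)^4)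
  + 7871019172838222878685522569581750085979779938427671576576*(y^9*(3929-5000*y)^3)
  + 11955659390695462372752216897958365433201493669618610233640000*(y^10*(3929-5000*y)^2)
  + 10449174591281062338007958558607239995942136943936574093200000000*(y^11*(3929-5000*y)^1)
  + 3997746025827990336478050129360648172369337092388561697000000000000*(y^12*(3929-5000*y)^0)).

Lemma tan_lower_poly_near_0 (p y : R) :
  3141592/1000000 <= p <= 3141593/1000000 -> 0 < y <= 157/200 ->
  y * tan_lower_numer p y * cos_taylor8 y < 3*p^4*(p^2 - 4*y^2) * sin_taylor7 y.
Proof.
  intros [hp0 hp1] [hy0 hy1]. apply Rlt_0_minus.
  apply (pos_of_scaled_eq 14883934245198939688320000000000000000000000000000000000000 (lower_certificate_near_0 p y)); [lra| |].
  - unfold lower_certificate_near_0, tan_lower_numer, cos_taylor8, cos_taylor6, sin_taylor7.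
    field.
  - unfold lower_certificate_near_0. certificate_pos.
Qed.

Lemma tan_upper_poly_near_0 (p y : R) :
  3141592/1000000 <= p <= 3141593/1000000 -> 0 < y <= 157/200 ->
  p^4*(p^2 - 4*y^2) * sin_taylor9 y < y * tan_upper_numer p y * cos_taylor6 y.
Proof.
  intros [hp0 hp1] [hy0 hy1]. apply Rlt_0_minus.
  apply (pos_of_scaled_eq 133955408206790457194880000000000000000000000000000000000000 (upper_certificate_near_0 p y)); [lra| |].
  - unfold upper_certificate_near_0, tan_upper_numer, cos_taylor6, sin_taylor9, sin_taylor7.
    field.
  - unfold upper_certificate_near_0. certificate_pos.
Qed.

Lemma tan_lower_poly_near_PI2 (p y : R) :
  3141592/1000000 <= p <= 3141593/1000000 -> 0 < y <= 3929/5000 ->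
  (p/2 - y) * tan_lower_numer p (p/2 - y) * sin_taylor9 y
    < 3*p^4*(p^2 - 4*(p/2 - y)^2) * cos_taylor6 y.
Proof.
  intros [hp0 hp1] [hy0 hy1]. apply Rlt_0_minus.
  apply (pos_of_scaled_eq 9821489897969225079596845351678231348031460668160000000000000000000000000000000000000000000000000 (lower_certificate_near_PI2 p y)); [lra| |].
  - unfold lower_certificate_near_PI2, tan_lower_numer, cos_taylor6, sin_taylor9, sin_taylor7.
    field.
  - unfold lower_certificate_near_PI2. certificate_pos.
Qed.

Lemma tan_upper_poly_near_PI2 (p y : R) :
  3141592/1000000 <= p <= 3141593/1000000 -> 0 < y <= 3929/5000 ->
  p^4*(p^2 - 4*(p/2 - y)^2) * cos_taylor8 y
    < (p/2 - y) * tan_upper_numer p (p/2 - y) * sin_taylor7 y.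
Proof.
  intros [hp0 hp1] [hy0 hy1]. apply Rlt_0_minus.
  apply (pos_of_scaled_eq 2249048347022281760632524082505447520000000000000000000000000000000 (upper_certificate_near_PI2 p y)); [lra| |].
  - unfold upper_certificate_near_PI2, tan_upper_numer, cos_taylor8, cos_taylor6, sin_taylor7.
    field.
  - unfold upper_certificate_near_PI2. certificate_pos.
Qed.

Lemma tan_lower_key (x : R) :
  0 < x < PI/2 -> x * tan_lower_numer PI x * cos x < 3*PI^4*(PI^2 - 4*x^2) * sin x.
Proof.
  intros [hx0 hx1]. pose proof PI_bounds as [hp0 hp1].
  assert (hQ : 0 < tan_lower_numer PI x) by (apply tan_lower_numer_pos; lra).
  assert (hD : 0 <= 3*PI^4*(PI^2 - 4*x^2)).
  { apply Rmult_le_pos; [apply Rmult_le_pos; [lra|apply pow_le; lra]|nra]. }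
  destruct (Rle_lt_dec x (157/200)) as [hnear0|hfar].
  - apply (lt_mul_sandwich _ _ _ (cos_taylor8 x) _ (sin_taylor7 x)); try nra.
    + apply cos_taylor_bounds; lra.
    + apply sin_taylor_bounds; lra.
    + apply tan_lower_poly_near_0; lra.
  - replace x with (PI/2 - (PI/2 - x)) in * by ring. set (y := PI/2 - x) in *.
    rewrite sin_shift, cos_shift.
    apply (lt_mul_sandwich _ _ _ (sin_taylor9 y) _ (cos_taylor6 y)); try nra.
    + apply sin_taylor_bounds; lra.
    + apply cos_taylor_bounds; lra.
    + apply tan_lower_poly_near_PI2; lra.
Qed.

Lemma tan_upper_key (x : R) :
  0 < x < PI/2 -> PI^4*(PI^2 - 4*x^2) * sin x < x * tan_upper_numer PI x * cos x.
Proof.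
  intros [hx0 hx1]. pose proof PI_bounds as [hp0 hp1].
  assert (hQ : 0 < tan_upper_numer PI x) by (apply tan_upper_numer_pos; lra).
  assert (hD : 0 <= PI^4*(PI^2 - 4*x^2)) by (apply Rmult_le_pos; [apply pow_le; lra|nra]).
  destruct (Rle_lt_dec x (157/200)) as [hnear0|hfar].
  - apply (lt_mul_sandwich _ _ _ (sin_taylor9 x) _ (cos_taylor6 x)); try nra.
    + apply sin_taylor_bounds; lra.
    + apply cos_taylor_bounds; lra.
    + apply tan_upper_poly_near_0; lra.
  - replace x with (PI/2 - (PI/2 - x)) in * by ring. set (y := PI/2 - x) in *.
    rewrite sin_shift, cos_shift.
    apply (lt_mul_sandwich _ _ _ (cos_taylor8 y) _ (sin_taylor7 y)); try nra.
    + apply cos_taylor_bounds; lra.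
    + apply sin_taylor_bounds; lra.
    + apply tan_upper_poly_near_PI2; lra.
Qed.

Theorem mainTheorem15 (x : R) (hx0 : 0 < x) (hx1 : x < PI / 2) :
  (PI ^ 2 + (PI ^ 2 - 12) / 3 * x ^ 2
     + (384 - 4 * PI ^ 4) / (3 * PI ^ 4) * x ^ 4) / (PI ^ 2 - 4 * x ^ 2)
    < tan x / x /\
  tan x / x <
  (PI ^ 2 + (72 - 8 * PI ^ 2) / PI ^ 2 * x ^ 2
     + (16 * PI ^ 2 - 160) / PI ^ 4 * x ^ 4) / (PI ^ 2 - 4 * x ^ 2).
Proof.
  pose proof PI_bounds as [hp0 hp1].
  assert (hD : 0 < PI^2 - 4*x^2) by nra.
  assert (hPI4 : 0 < PI^4) by (apply pow_lt; lra).
  assert (hcos : 0 < cos x) by (apply cos_gt_0; lra).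
  replace (tan x / x) with (sin x / (x * cos x)) by (unfold tan; field; split; lra).
  pose proof (tan_lower_key x (conj hx0 hx1)) as Hlower.
  pose proof (tan_upper_key x (conj hx0 hx1)) as Hupper.
  split.
  - replace (_ / (PI^2 - 4*x^2)) with (tan_lower_numer PI x / (3*PI^4*(PI^2 - 4*x^2)))
      by (unfold tan_lower_numer; field; lra).
    apply Rdiv_lt_Rdiv; [nra|nra|lra].
  - replace (_ / (PI^2 - 4*x^2)) with (tan_upper_numer PI x / (PI^4*(PI^2 - 4*x^2)))
      by (unfold tan_upper_numer; field; lra).
    apply Rdiv_lt_Rdiv; [nra|nra|lra].
Qed.
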